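(* Let $m\ge2$. For $\beta\in(\mathcal{G}(m),\beta_f(m)]$ one has $|S_{\beta,m}|=1$ if $m$ is even and $|S_{\beta,m}|=2$ if $m$ is odd; and $|S_{\beta,m}|\ge\aleph_0$ for $\beta\in(\beta_f(m),m+1]$.
   Context: For $\beta\in(1,m+1]$ and $x\in[0,\frac{m}{\beta-1}]$, $\Sigma_{\beta,m}(x)=\{(\epsilon_i)\in\{0,\ldots,m\}^{\mathbb{N}}:\sum_{i\ge1}\epsilon_i\beta^{-i}=x\}$. $W_{\beta,m}=\{x\in(\frac{m+1-\beta}{\beta-1},1):|\Sigma_{\beta,m}(x)|=1\}$ and $S_{\beta,m}=\{(\epsilon_i)\in\{0,\ldots,m\}^{\mathbb{N}}:\sum_{i\ge1}\epsilon_i\beta^{-i}\in W_{\beta,m}\}$. $\mathcal{G}(m)=k+1$ if $m=2k$ and $\mathcal{G}(m)=\frac{k+1+\sqrt{k^2+6k+5}}{2}$ if $m=2k+1$. $\beta_f(m)=\frac{k+1+\sqrt{k^2+6k+1}}{2}$ if $m=2k$, and $\beta_f(m)$ is the largest real root of $x^3-(k+2)x^2+x-(k+1)=0$ if $m=2k+1$. *)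

From Stdlib Require Import Reals.
From Coquelicot Require Import Coquelicot.
Open Scope R_scope.

(* A digit sequence (eps_i)_{i>=1} is represented by e : nat -> nat with
   e n = eps_{n+1}.  It lies in {0,...,m}^N iff every digit is <= m. *)
Definition digits (m : nat) (e : nat -> nat) : Prop := forall n, (e n <= m)%nat.

Definition term (beta : R) (e : nat -> nat) (n : nat) : R :=
  INR (e n) / beta ^ (S n).

Definition Sigma (beta : R) (m : nat) (x : R) (e : nat -> nat) : Prop :=
  digits m e /\ is_series (term beta e) x.

Definition W (beta : R) (m : nat) (x : R) : Prop :=
  (INR m + 1 - beta) / (beta - 1) < x /\ x < 1 /\
  exists e, Sigma beta m x e /\ forall e', Sigma beta m x e' -> e' = e.

Definition Sset (beta : R) (m : nat) (e : nat -> nat) : Prop :=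
  digits m e /\ exists x, is_series (term beta e) x /\ W beta m x.

Definition Gm (m : nat) : R :=
  let k := INR (Nat.div2 m) in
  if Nat.even m then k + 1
  else (k + 1 + sqrt (k ^ 2 + 6 * k + 5)) / 2.

Definition is_beta_f (m : nat) (b : R) : Prop :=
  let k := INR (Nat.div2 m) in
  if Nat.even m then b = (k + 1 + sqrt (k ^ 2 + 6 * k + 1)) / 2
  else (b ^ 3 - (k + 2) * b ^ 2 + b - (k + 1) = 0 /\
        forall y, y ^ 3 - (k + 2) * y ^ 2 + y - (k + 1) = 0 -> y <= b).

Definition card_is_one (P : (nat -> nat) -> Prop) : Prop :=
  exists e, P e /\ forall e', P e' -> e' = e.

Definition card_is_two (P : (nat -> nat) -> Prop) : Prop :=
  exists e1 e2, e1 <> e2 /\ P e1 /\ P e2 /\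
    forall e, P e -> e = e1 \/ e = e2.

Definition at_least_countable (P : (nat -> nat) -> Prop) : Prop :=
  exists f : nat -> (nat -> nat),
    (forall i j, f i = f j -> i = j) /\ forall i, P (f i).

From Stdlib Require Import Reals Lra Lia FunctionalExtensionality Arith.
From Coquelicot Require Import Coquelicot.
Open Scope R_scope.

(* For [1 < b <= m + 1] put [L = (m + 1 - b)/(b - 1)].  A digit sequence belongs to
   [S_{b,m}] iff the values [v_n] of all its tails lie in [(L, 1)]: if a tail value left
   this interval, one digit could be changed by one and the remainder re-expanded greedily.
   Since [b v_n = c_n + v_(n+1)], the digits of such a sequence lie in the window
   [(b L - 1, b - L)] and [b c_n + c_(n+1)] lies in [(b^2 L - 1, b^2 - L)].  For
   [b <= beta_f(m)] these windows leave only the constant sequence [k^oo] (m = 2k), resp. the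
   two alternating sequences of [k] and [k+1] (m = 2k+1), and these lie in [S_{b,m}] exactly
   when [b > G(m)].  For [b > beta_f(m)] the sequences [k^(2i) (k+1, k-1)^oo], resp.
   [(k+1, k)^i (k+1, k+1, k, k)^oo], all lie in [S_{b,m}]; their values converge
   geometrically to the fixed point of the prefixed block, so they are pairwise distinct. *)

Lemma INR_add1_le_of_lt a c : (a < c)%nat -> INR a + 1 <= INR c.
Proof. intros H; rewrite <- S_INR; apply le_INR; lia. Qed.

Lemma le_of_INR_lt_add1 j k : INR j < INR k + 1 -> (j <= k)%nat.
Proof.
  intros H; destruct (le_lt_dec j k) as [|Hlt]; auto.
  apply INR_add1_le_of_lt in Hlt; lra.
Qed.

Lemma INR_double k : INR (2 * k) = 2 * INR k.
Proof. rewrite mult_INR; simpl; ring. Qed.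

Lemma INR_double_add1 k : INR (2 * k + 1) = 2 * INR k + 1.
Proof. rewrite plus_INR, INR_double; simpl; ring. Qed.

Lemma Rabs_div_pow_le b x j : 1 <= b -> Rabs (x / b ^ j) <= Rabs x.
Proof.
  intros Hb; pose proof (pow_R1_Rle b j Hb).
  unfold Rdiv; rewrite Rabs_mult, Rabs_inv, (Rabs_right (b ^ j)) by lra.
  rewrite <- (Rmult_1_r (Rabs x)) at 2.
  apply Rmult_le_compat_l; [apply Rabs_pos|].
  rewrite <- Rinv_1; apply Rinv_le_contravar; lra.
Qed.

Definition val (b : R) (e : nat -> nat) : R := Series (term b e).

Definition tailn (e : nat -> nat) (n : nat) : nat -> nat := fun i => e (n + i)%nat.

Definition dcons (a : nat) (e : nat -> nat) : nat -> nat :=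
  fun n => match n with O => a | S n => e n end.

Definition graft (c : nat -> nat) (n : nat) (g : nat -> nat) : nat -> nat :=
  fun i => if (i <? n)%nat then c i else g (i - n)%nat.

Lemma tailn_dcons c n : tailn c n = dcons (c n) (tailn c (S n)).
Proof.
  apply functional_extensionality; intros [|i]; unfold tailn; simpl; f_equal; lia.
Qed.

Lemma graft_0 c g : graft c 0 g = g.
Proof. apply functional_extensionality; intro i; unfold graft; simpl; f_equal; lia. Qed.

Lemma graft_S c n g : graft c (S n) g = dcons (c O) (graft (tailn c 1) n g).
Proof. apply functional_extensionality; intros [|i]; reflexivity. Qed.

Lemma graft_at c n g : graft c n g n = g O.
Proof. unfold graft; rewrite Nat.ltb_irrefl, Nat.sub_diag; reflexivity. Qed.

Lemma digits_dcons m a e : (a <= m)%nat -> digits m e -> digits m (dcons a e).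
Proof. intros Ha He [|n]; simpl; auto. Qed.

Lemma digits_tailn m e n : digits m e -> digits m (tailn e n).
Proof. intros He i; apply He. Qed.

Lemma digits_graft m c n g : digits m c -> digits m g -> digits m (graft c n g).
Proof. intros Hc Hg i; unfold graft; destruct (i <? n)%nat; auto. Qed.

Lemma bounded_geometric_zero b x B : 1 < b -> (forall j, Rabs (b ^ j * x) <= B) -> x = 0.
Proof.
  intros Hb HB.
  destruct (Req_dec x 0) as [|Hx]; auto; exfalso.
  assert (Hxp : 0 < Rabs x) by (apply Rabs_pos_lt; auto).
  destruct (Pow_x_infinity b ltac:(rewrite Rabs_right; lra) ((B + 1) / Rabs x))
    as [N HN].
  specialize (HN N (Nat.le_refl N)); specialize (HB N).
  rewrite Rabs_mult in HB.
  apply Rge_le, (Rmult_le_compat_r (Rabs x)) in HN; [|lra].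
  unfold Rdiv in HN; rewrite Rmult_assoc, Rinv_l in HN; lra.
Qed.

Section Values.

Variables (b : R) (m : nat).
Hypothesis Hb : 1 < b.

Lemma term_bounds e n : digits m e -> 0 <= term b e n <= INR m / b * (/ b) ^ n.
Proof.
  intros He. unfold term.
  assert (Hp : 0 < b ^ S n) by (apply pow_lt; lra).
  replace (INR m / b * (/ b) ^ n) with (INR m / b ^ S n)
    by (rewrite pow_inv; simpl; field; split; [apply pow_nonzero|]; lra).
  pose proof (le_INR _ _ (He n)); pose proof (pos_INR (e n)).
  split; apply Rmult_le_compat_r || apply Rmult_le_pos;
    try (left; apply Rinv_0_lt_compat); lra.
Qed.

Lemma Rabs_inv_lt_1 : Rabs (/ b) < 1.
Proof.
  rewrite Rabs_right by (left; apply Rinv_0_lt_compat; lra).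
  rewrite <- Rinv_1; apply Rinv_lt_contravar; lra.
Qed.

Lemma ex_series_geom_scal c : ex_series (fun n => c * (/ b) ^ n).
Proof. apply (ex_series_scal_l c (fun n => (/ b) ^ n)), ex_series_geom, Rabs_inv_lt_1. Qed.

Lemma ex_series_term e : digits m e -> ex_series (term b e).
Proof.
  intros He.
  apply (@ex_series_le R_AbsRing R_CompleteNormedModule _
           (fun n => INR m / b * (/ b) ^ n)); [|apply ex_series_geom_scal].
  intro n; pose proof (term_bounds e n He).
  unfold norm; simpl; unfold abs; simpl; rewrite Rabs_right; lra.
Qed.

Lemma val_bounds e : digits m e -> 0 <= val b e <= INR m / (b - 1).
Proof.
  intros He; unfold val; split.
  - rewrite <- (Rmult_0_l (Series (fun n => 1 * term b e n))) at 1.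
    rewrite <- Series_scal_l.
    apply Series_le; [|apply ex_series_term; auto].
    intro n; pose proof (term_bounds e n He); lra.
  - replace (INR m / (b - 1)) with (Series (fun n => INR m / b * (/ b) ^ n)).
    + apply Series_le; [intro n; apply term_bounds; auto|apply ex_series_geom_scal].
    + rewrite Series_scal_l, Series_geom by apply Rabs_inv_lt_1; field; lra.
Qed.

Lemma val_dcons a e : digits m e -> b * val b (dcons a e) = INR a + val b e.
Proof.
  intros He; unfold val.
  assert (Hshift : forall k, term b (dcons a e) (S k) = / b * term b e k)
    by (intro k; unfold term; simpl; field; split; [apply pow_nonzero|]; lra).
  rewrite Series_incr_1, (Series_ext _ _ Hshift), Series_scal_l.
  - unfold term at 1; simpl; field; lra.
  - apply ex_series_incr_1, (ex_series_ext _ _ (fun k => eq_sym (Hshift k))).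
    apply (ex_series_scal_l (/ b) (term b e)), ex_series_term; auto.
Qed.

Lemma val_tailn_succ c n : digits m c ->
  b * val b (tailn c n) = INR (c n) + val b (tailn c (S n)).
Proof. intros Hc; rewrite tailn_dcons; apply val_dcons, digits_tailn; auto. Qed.

Lemma val_graft c n g : digits m c -> digits m g ->
  val b g = val b (tailn c n) -> val b (graft c n g) = val b c.
Proof.
  revert c; induction n as [|n IH]; intros c Hc Hg Hv; [rewrite graft_0; auto|].
  apply (Rmult_eq_reg_l b); [|lra].
  rewrite graft_S, val_dcons by (apply digits_graft; auto using digits_tailn).
  rewrite IH by (auto using digits_tailn).
  apply eq_sym, (val_tailn_succ c 0 Hc).
Qed.

(* The difference with the true tail values is multiplied by [b] at each step. *)
Lemma val_tailn_of_orbit c y B : digits m c ->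
  (forall n, b * y n = INR (c n) + y (S n)) -> (forall n, Rabs (y n) <= B) ->
  forall n, y n = val b (tailn c n).
Proof.
  intros Hc Hy HB n.
  set (d := fun i => y i - val b (tailn c i)).
  assert (Hd : forall j, d (n + j)%nat = b ^ j * d n).
  { induction j as [|j IH]; [rewrite Nat.add_0_r; simpl; ring|].
    rewrite Nat.add_succ_r; simpl; rewrite Rmult_assoc, <- IH.
    unfold d; pose proof (val_tailn_succ c (n + j) Hc); pose proof (Hy (n + j)%nat).
    lra. }
  apply Rminus_diag_uniq, (bounded_geometric_zero b (d n) (B + INR m / (b - 1)) Hb).
  intro j; rewrite <- Hd; unfold d.
  pose proof (val_bounds _ (digits_tailn m c (n + j) Hc)).
  pose proof (HB (n + j)%nat) as Hyj; apply Rabs_le_between in Hyj.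
  apply Rabs_le; lra.
Qed.

End Values.

Fixpoint greedy_digit (m : nat) (z : R) : nat :=
  match m with
  | O => O
  | S p => if Rle_dec (INR (S p)) z then S p else greedy_digit p z
  end.

Lemma greedy_digit_le m z : (greedy_digit m z <= m)%nat.
Proof. induction m; simpl; [lia|destruct Rle_dec; lia]. Qed.

Lemma greedy_digit_below m z : 0 <= z -> INR (greedy_digit m z) <= z.
Proof. intros Hz; induction m; simpl; [lra|destruct Rle_dec; auto]. Qed.

Lemma greedy_digit_above m z : (greedy_digit m z < m)%nat -> z < INR (greedy_digit m z) + 1.
Proof.
  induction m as [|m IH]; cbn [greedy_digit]; intros H; [lia|].
  destruct Rle_dec as [|Hz]; [lia|].
  destruct (Nat.eq_dec (greedy_digit m z) m) as [E|E].
  - rewrite E; rewrite S_INR in Hz; lra.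
  - apply IH; pose proof (greedy_digit_le m z); lia.
Qed.

Definition Wlo (b : R) (m : nat) : R := (INR m + 1 - b) / (b - 1).

Definition tails_in_W (b : R) (m : nat) (c : nat -> nat) : Prop :=
  forall n, Wlo b m < val b (tailn c n) < 1.

Section Characterization.

Variables (b : R) (m : nat).
Hypotheses (Hb : 1 < b) (Hbm : b <= INR m + 1).

Lemma Wlo_nonneg : 0 <= Wlo b m.
Proof. unfold Wlo; apply Rdiv_le_0_compat; lra. Qed.

Lemma Wlo_add1 : Wlo b m + 1 = INR m / (b - 1).
Proof. unfold Wlo; field; lra. Qed.

Lemma val_le_Wlo_add1 e : digits m e -> val b e <= Wlo b m + 1.
Proof. intros He; rewrite Wlo_add1; apply (val_bounds b m Hb e He). Qed.

Lemma greedy_expansion y : 0 <= y <= INR m / (b - 1) ->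
  exists g, digits m g /\ val b g = y.
Proof.
  intros Hy.
  set (M := INR m / (b - 1)).
  assert (HM : M * (b - 1) = INR m) by (unfold M; field; lra).
  assert (HM1 : 1 <= M) by nra.
  set (r := fix r n := match n with
                       | O => y
                       | S n => b * r n - INR (greedy_digit m (b * r n)) end).
  set (g := fun n => greedy_digit m (b * r n)).
  assert (Hr : forall n, 0 <= r n <= M).
  { induction n as [|n IH]; [exact Hy|].
    change (r (S n)) with (b * r n - INR (g n)).
    assert (Hlo : INR (g n) <= b * r n) by (apply greedy_digit_below; nra).
    destruct (Nat.eq_dec (g n) m) as [E|E].
    - rewrite E in *; nra.
    - assert (Hhi : b * r n < INR (g n) + 1)
        by (apply greedy_digit_above; pose proof (greedy_digit_le m (b * r n)); unfold g in E; lia).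
      lra. }
  exists g; split; [intro n; apply greedy_digit_le|].
  change y with (r O); rewrite (val_tailn_of_orbit b m Hb g r M (fun n => greedy_digit_le m _));
    [reflexivity| |].
  - intro n; change (r (S n)) with (b * r n - INR (g n)); ring.
  - intro n; specialize (Hr n); rewrite Rabs_right; lra.
Qed.

Lemma tails_in_W_unique c d : digits m c -> tails_in_W b m c -> digits m d ->
  val b d = val b c -> d = c.
Proof.
  intros Hc HW Hd Hv.
  assert (Hstep : forall n, val b (tailn d n) = val b (tailn c n) ->
            d n = c n /\ val b (tailn d (S n)) = val b (tailn c (S n))).
  { intros n Hn.
    pose proof (val_tailn_succ b m Hb c n Hc); pose proof (val_tailn_succ b m Hb d n Hd).
    pose proof (HW (S n)); pose proof (val_le_Wlo_add1 _ (digits_tailn m d (S n) Hd)).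
    pose proof (val_bounds b m Hb _ (digits_tailn m d (S n) Hd)).
    rewrite Hn in *.
    destruct (lt_eq_lt_dec (d n) (c n)) as [[Hlt|Heq]|Hlt];
      [apply INR_add1_le_of_lt in Hlt; lra| |apply INR_add1_le_of_lt in Hlt; lra].
    split; [auto|]. rewrite Heq in *; lra. }
  assert (Htl : forall n, val b (tailn d n) = val b (tailn c n))
    by (induction n as [|n IH]; [exact Hv|apply Hstep, IH]).
  apply functional_extensionality; intro n; apply Hstep, Htl.
Qed.

Lemma digit_forced_of_unique c n a g : digits m c ->
  (forall d, digits m d -> val b d = val b c -> d = c) ->
  (a <= m)%nat -> digits m g -> INR a + val b g = b * val b (tailn c n) -> a = c n.
Proof.
  intros Hc Hu Ha Hg Hv.
  assert (Hd : digits m (dcons a g)) by (apply digits_dcons; auto).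
  assert (Hdv : val b (dcons a g) = val b (tailn c n)).
  { apply (Rmult_eq_reg_l b); [|lra]. rewrite (val_dcons b m Hb a g Hg); auto. }
  pose proof (Hu _ (digits_graft m c n _ Hc Hd) (val_graft b m Hb c n _ Hc Hd Hdv)) as E.
  rewrite <- E, graft_at; reflexivity.
Qed.

Lemma tails_in_W_of_unique c : digits m c -> Wlo b m < val b c < 1 ->
  (forall d, digits m d -> val b d = val b c -> d = c) -> tails_in_W b m c.
Proof.
  intros Hc Hx Hu n; induction n as [|n IH]; [exact Hx|].
  pose proof (val_tailn_succ b m Hb c n Hc) as Hs.
  pose proof (val_bounds b m Hb _ (digits_tailn m c (S n) Hc)).
  pose proof (val_le_Wlo_add1 _ (digits_tailn m c (S n) Hc)).
  pose proof Wlo_nonneg; pose proof (Hc n).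
  set (v := val b (tailn c n)) in *; set (v' := val b (tailn c (S n))) in *.
  split.
  - destruct (Rle_lt_dec v' (Wlo b m)) as [Hle|]; auto; exfalso.
    destruct (Nat.eq_dec (c n) 0) as [E|E]; [rewrite E in Hs; simpl in Hs; nra|].
    destruct (greedy_expansion (v' + 1)) as [g [Hg Hgv]]; [rewrite <- Wlo_add1; lra|].
    enough (c n - 1 = c n)%nat by lia.
    apply (digit_forced_of_unique c n (c n - 1) g Hc Hu ltac:(lia) Hg).
    rewrite minus_INR by lia; simpl; fold v; lra.
  - destruct (Rlt_le_dec v' 1) as [|Hge]; auto; exfalso.
    destruct (Nat.eq_dec (c n) m) as [E|E]; [rewrite E in Hs; nra|].
    destruct (greedy_expansion (v' - 1)) as [g [Hg Hgv]]; [rewrite <- Wlo_add1; lra|].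
    enough (S (c n) = c n) by lia.
    apply (digit_forced_of_unique c n (S (c n)) g Hc Hu ltac:(lia) Hg).
    rewrite S_INR; fold v; lra.
Qed.

Lemma Sset_iff_tails c : digits m c -> Sset b m c <-> tails_in_W b m c.
Proof.
  intros Hc; split.
  - intros [_ [x [Hs [Hlo [Hhi [e [[He Hes] Hu]]]]]]].
    assert (Hx : x = val b c) by (symmetry; apply is_series_unique; auto).
    assert (Hce : c = e) by (apply Hu; split; auto).
    apply tails_in_W_of_unique; [auto|rewrite <- Hx; auto|].
    intros d Hd Hdv; rewrite Hce; apply Hu; split; [auto|].
    rewrite Hx, <- Hdv; apply Series_correct, (ex_series_term b m Hb d Hd).
  - intros HW; split; [auto|]; exists (val b c).
    assert (Hser : forall e, digits m e -> is_series (term b e) (val b e))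
      by (intros e He; apply Series_correct, (ex_series_term b m Hb e He)).
    split; [auto|]; split; [apply (HW O)|]; split; [apply (HW O)|].
    exists c; split; [split; auto|].
    intros e [He Hes]; apply (tails_in_W_unique c e Hc HW He).
    apply is_series_unique in Hes; unfold val; auto.
Qed.

End Characterization.

Definition Wmid (b : R) (m : nat) : R := INR m / (2 * (b - 1)).

Lemma Wmid_add_lt_1 b m x : 1 < b -> INR m + 2 * x * (b - 1) < 2 * (b - 1) ->
  Wmid b m + x < 1.
Proof.
  intros Hb H.
  replace (Wmid b m + x) with ((INR m + 2 * x * (b - 1)) / (2 * (b - 1)))
    by (unfold Wmid; field; lra).
  apply (Rmult_lt_reg_r (2 * (b - 1))); [lra|].
  unfold Rdiv; rewrite Rmult_assoc, Rinv_l; lra.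
Qed.

Definition alt (p q : nat) (n : nat) : nat := if Nat.even n then p else q.

Definition cyc4 {A : Type} (x0 x1 x2 x3 : A) (n : nat) : A :=
  match (n mod 4)%nat with 0%nat => x0 | 1%nat => x1 | 2%nat => x2 | _ => x3 end.

Lemma alt_S p q n : alt p q (S n) = alt q p n.
Proof. unfold alt; rewrite Nat.even_succ, <- Nat.negb_even; destruct (Nat.even n); auto. Qed.

Lemma alt_of_no_repeat e p q : (forall n, e n = p \/ e n = q) -> (forall n, e (S n) <> e n) ->
  e = alt p q \/ e = alt q p.
Proof.
  intros Hpq Hrep.
  assert (Hfrom : forall p' q', (forall n, e n = p' \/ e n = q') -> e O = p' -> e = alt p' q').
  { intros p' q' H' H0; apply functional_extensionality; intro n.
    induction n as [|n IH]; [exact H0|].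
    rewrite alt_S; specialize (Hrep n); unfold alt in *.
    destruct (Nat.even n); destruct (H' (S n)); congruence. }
  destruct (Hpq O); [left|right]; apply Hfrom; auto; intro n; destruct (Hpq n); auto.
Qed.

Lemma cyc4_S {A : Type} (x0 x1 x2 x3 : A) n : cyc4 x0 x1 x2 x3 (S n) = cyc4 x1 x2 x3 x0 n.
Proof.
  unfold cyc4; replace (S n) with (n + 1)%nat by lia.
  rewrite <- Nat.Div0.add_mod_idemp_l.
  pose proof (Nat.mod_upper_bound n 4 ltac:(lia)).
  destruct (n mod 4)%nat as [|[|[|[|r]]]]; reflexivity || lia.
Qed.

Definition pair_prefix (p q i : nat) (g : nat -> nat) : nat -> nat :=
  Nat.iter i (fun h => dcons p (dcons q h)) g.

Section Construction.

Variables (b : R) (m : nat).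
Hypotheses (Hb : 1 < b) (Hbm : b <= INR m + 1).

Lemma Wmid_mul : b * Wmid b m = Wmid b m + INR m / 2.
Proof. unfold Wmid; field; lra. Qed.

Lemma in_W_of_near_Wmid x : Rabs (x - Wmid b m) < 1 - Wmid b m -> Wlo b m < x < 1.
Proof.
  intros Hx; apply Rabs_def2 in Hx.
  replace (Wlo b m) with (2 * Wmid b m - 1) by (unfold Wlo, Wmid; field; lra); lra.
Qed.

Lemma Sset_of_orbit c y : digits m c ->
  (forall n, b * y n = INR (c n) + y (S n)) -> (forall n, Wlo b m < y n < 1) ->
  Sset b m c /\ val b c = y O.
Proof.
  intros Hc Hy HW.
  assert (Htl : forall n, y n = val b (tailn c n)).
  { apply (val_tailn_of_orbit b m Hb c y 1 Hc Hy).
    intro n; pose proof (Wlo_nonneg b m Hb Hbm); pose proof (HW n).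
    rewrite Rabs_right; lra. }
  split; [|symmetry; apply (Htl O)].
  apply Sset_iff_tails; auto; intro n; rewrite <- Htl; auto.
Qed.

Lemma Sset_dcons a g : Sset b m g -> (a <= m)%nat -> Wlo b m < val b (dcons a g) < 1 ->
  Sset b m (dcons a g).
Proof.
  intros Hg Ha Hv; pose proof (proj1 Hg) as Hgd.
  assert (Hd : digits m (dcons a g)) by (apply digits_dcons; auto).
  apply Sset_iff_tails in Hg; auto.
  apply Sset_iff_tails; auto; intros [|n]; [exact Hv|exact (Hg n)].
Qed.

Lemma val_dcons_offset c h u u' x j : digits m h -> b * u = INR c + u' ->
  val b h = u' + x / b ^ j -> val b (dcons c h) = u + x / b ^ S j.
Proof.
  intros Hh Hu Hv; apply (Rmult_eq_reg_l b); [|lra].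
  rewrite (val_dcons b m Hb c h Hh), Hv; replace (INR c) with (b * u - u') by lra.
  simpl; field; split; [apply pow_nonzero|]; lra.
Qed.

Section Alternating.

Variables p q : nat.
Hypothesis Hpq : (p + q = m)%nat.

Let t := Wmid b m.
Let a := (INR p - INR q) / (2 * (b + 1)).

Lemma alt_orbit_step : b * (t + a) = INR p + (t - a) /\ b * (t - a) = INR q + (t + a).
Proof.
  pose proof Wmid_mul; fold t in H.
  rewrite <- Hpq, plus_INR in H; unfold a; split; field_simplify; nra.
Qed.

Lemma Sset_alt : t + Rabs a < 1 -> Sset b m (alt p q) /\ val b (alt p q) = t + a.
Proof.
  intros Ha.
  apply (Sset_of_orbit _ (fun n => if Nat.even n then t + a else t - a)).
  - intro n; unfold alt; destruct (Nat.even n); lia.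
  - intro n; pose proof alt_orbit_step.
    unfold alt; rewrite Nat.even_succ, <- Nat.negb_even; destruct (Nat.even n); simpl; lra.
  - intro n; apply in_W_of_near_Wmid; fold t.
    destruct (Nat.even n).
    + replace (t + a - t) with a by ring; lra.
    + replace (t - a - t) with (- a) by ring; rewrite Rabs_Ropp; lra.
Qed.

Lemma Sset_pair_prefix g : Sset b m g -> t + Rabs a + Rabs (val b g - (t + a)) < 1 ->
  forall i, Sset b m (pair_prefix p q i g) /\
            val b (pair_prefix p q i g) = t + a + (val b g - (t + a)) / b ^ (2 * i).
Proof.
  intros Hg Hclose; set (d := val b g - (t + a)) in *.
  assert (Hnear : forall x j, Rabs x <= Rabs a -> Wlo b m < t + x + d / b ^ j < 1).
  { intros x j Hx; apply in_W_of_near_Wmid; fold t.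
    replace (t + x + d / b ^ j - t) with (x + d / b ^ j) by ring.
    pose proof (Rabs_div_pow_le b d j ltac:(lra)); pose proof (Rabs_triang x (d / b ^ j)).
    lra. }
  pose proof alt_orbit_step as [Hp Hq].
  induction i as [|i [Hi Hiv]]; [split; [exact Hg|]; simpl; unfold d; field|].
  set (h := pair_prefix p q i g) in *.
  pose proof (val_dcons_offset q h (t - a) (t + a) d (2 * i) (proj1 Hi) Hq Hiv) as Hqv.
  assert (Hqs : Sset b m (dcons q h)).
  { apply Sset_dcons; [auto|lia|]; rewrite Hqv; apply Hnear; rewrite Rabs_Ropp; lra. }
  pose proof (val_dcons_offset p _ (t + a) (t - a) d _ (proj1 Hqs) Hp Hqv) as Hpv.
  change (pair_prefix p q (S i) g) with (dcons p (dcons q h)).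
  replace (2 * S i)%nat with (S (S (2 * i))) by lia.
  split; [apply Sset_dcons; [auto|lia|]; rewrite Hpv; apply Hnear; lra|exact Hpv].
Qed.

Lemma countable_Sset_of_pair_prefix g : Sset b m g -> val b g <> t + a ->
  t + Rabs a + Rabs (val b g - (t + a)) < 1 -> at_least_countable (Sset b m).
Proof.
  intros Hg Hne Hclose.
  pose proof (Sset_pair_prefix g Hg Hclose) as Hf.
  exists (fun i => pair_prefix p q i g); split; [|apply Hf].
  intros i j Hij.
  assert (Hv : (val b g - (t + a)) / b ^ (2 * i) = (val b g - (t + a)) / b ^ (2 * j)).
  { pose proof (proj2 (Hf i)); pose proof (proj2 (Hf j)); rewrite Hij in *; lra. }
  assert (Hpow : b ^ (2 * i) = b ^ (2 * j))
    by (unfold Rdiv in Hv; apply Rinv_eq_reg, (Rmult_eq_reg_l (val b g - (t + a))); lra).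
  destruct (lt_eq_lt_dec i j) as [[Hlt|]|Hlt]; auto.
  - pose proof (Rlt_pow b (2 * i) (2 * j) Hb ltac:(lia)); lra.
  - pose proof (Rlt_pow b (2 * j) (2 * i) Hb ltac:(lia)); lra.
Qed.

End Alternating.

Section Cycle.

Variables p q : nat.
Hypothesis Hpq : (p + q = m)%nat.

Let t := Wmid b m.
(* The offsets of the 4-periodic orbit from [t]: they solve [b r0 = s + r1] and
   [b r1 = s - r0] with [s = (p - q)/2]. *)
Let r0 := (INR p - INR q) / 2 * (b + 1) / (b ^ 2 + 1).
Let r1 := (INR p - INR q) / 2 * (b - 1) / (b ^ 2 + 1).

Lemma Sset_cyc4 : t + Rabs r0 < 1 -> Sset b m (cyc4 p p q q) /\ val b (cyc4 p p q q) = t + r0.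
Proof.
  intros Hr.
  assert (Hr10 : Rabs r1 <= Rabs r0).
  { replace r1 with (r0 * ((b - 1) / (b + 1))) by (unfold r0, r1; field; split; nra).
    assert (0 <= (b - 1) / (b + 1) <= 1).
    { split; [apply Rdiv_le_0_compat; lra|].
      apply (Rmult_le_reg_r (b + 1)); [lra|]; field_simplify; lra. }
    rewrite Rabs_mult, (Rabs_right ((b - 1) / (b + 1))) by lra.
    pose proof (Rabs_pos r0); nra. }
  pose proof Wmid_mul as Ht; fold t in Ht; rewrite <- Hpq, plus_INR in Ht.
  assert (Hb2 : b ^ 2 + 1 <> 0) by nra.
  apply (Sset_of_orbit _ (fun n => t + cyc4 r0 r1 (- r0) (- r1) n)).
  - intro n; unfold cyc4; destruct (n mod 4)%nat as [|[|[|[|]]]]; lia.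
  - intro n; rewrite cyc4_S; unfold cyc4.
    destruct (n mod 4)%nat as [|[|[|[|]]]]; unfold r0, r1; field_simplify; auto; nra.
  - intro n; apply in_W_of_near_Wmid; fold t; unfold cyc4.
    destruct (n mod 4)%nat as [|[|[|[|]]]];
      rewrite ?Rplus_minus_l, ?Rabs_Ropp; lra.
Qed.

End Cycle.

End Construction.

Section Windows.

Variables (b : R) (m : nat).
Hypotheses (Hb : 1 < b) (Hbm : b <= INR m + 1).

Lemma Wlo_mul : Wlo b m * (b - 1) = INR m + 1 - b.
Proof. unfold Wlo; field; lra. Qed.

Lemma digit_window e n : Sset b m e -> b * Wlo b m - 1 < INR (e n) < b - Wlo b m.
Proof.
  intros He; pose proof (proj1 He) as Hd; apply Sset_iff_tails in He; auto.
  pose proof (val_tailn_succ b m Hb e n Hd) as E0.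
  destruct (He n) as [Hlo Hhi]; pose proof (He (S n)).
  apply (Rmult_lt_compat_l b) in Hlo, Hhi; lra.
Qed.

Lemma digit_pair_window e n : Sset b m e ->
  b ^ 2 * Wlo b m - 1 < b * INR (e n) + INR (e (S n)) < b ^ 2 - Wlo b m.
Proof.
  intros He; pose proof (proj1 He) as Hd; apply Sset_iff_tails in He; auto.
  pose proof (val_tailn_succ b m Hb e n Hd) as E0.
  pose proof (val_tailn_succ b m Hb e (S n) Hd) as E1.
  destruct (He n) as [Hlo Hhi]; pose proof (He (S (S n))).
  assert (E : b ^ 2 * val b (tailn e n) = b * INR (e n) + INR (e (S n)) + val b (tailn e (S (S n))))
    by (replace (b ^ 2 * _) with (b * (b * val b (tailn e n))) by ring;
        rewrite E0, Rmult_plus_distr_l, E1; ring).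
  assert (Hb2 : 0 < b ^ 2) by nra.
  apply (Rmult_lt_compat_l (b ^ 2)) in Hlo, Hhi; lra.
Qed.

End Windows.

Section Even.

Variable k : nat.
Hypothesis Hk : (1 <= k)%nat.

Let K := INR k.

Lemma Sset_even_digit b e n : K + 1 < b -> b ^ 2 - (K + 1) * b - K <= 0 ->
  Sset b (2 * k) e -> e n = k.
Proof.
  intros Hb HQ He.
  assert (HK : 1 <= K) by (apply (le_INR 1); auto).
  assert (Hbm : b <= INR (2 * k) + 1) by (rewrite INR_double; fold K; nra).
  pose proof (digit_window b (2 * k) ltac:(lra) Hbm e n He) as Hw.
  pose proof (Wlo_mul b (2 * k) ltac:(lra)) as HL; rewrite INR_double in HL; fold K in HL.
  set (L := Wlo b (2 * k)) in *.
  assert (b - L <= K + 1) by nra.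
  assert (K <= b * L) by nra.
  pose proof (le_of_INR_lt_add1 (e n) k ltac:(fold K; lra)).
  pose proof (le_of_INR_lt_add1 k (e n) ltac:(fold K; lra)).
  lia.
Qed.

Lemma card_one_even b : K + 1 < b -> b ^ 2 - (K + 1) * b - K <= 0 ->
  card_is_one (Sset b (2 * k)).
Proof.
  intros Hb HQ.
  assert (HK : 1 <= K) by (apply (le_INR 1); auto).
  assert (Hbm : b <= INR (2 * k) + 1) by (rewrite INR_double; fold K; nra).
  exists (alt k k); split.
  - apply (Sset_alt b (2 * k) ltac:(lra) Hbm k k ltac:(lia)).
    replace (INR k - INR k) with 0 by ring; rewrite Rdiv_0_l, Rabs_R0.
    apply Wmid_add_lt_1; [lra|]; rewrite INR_double; fold K; lra.
  - intros e He; apply functional_extensionality; intro n.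
    rewrite (Sset_even_digit b e n Hb HQ He); unfold alt; destruct (Nat.even n); auto.
Qed.

Lemma countable_even b : K + 1 < b -> 0 < b ^ 2 - (K + 1) * b - K -> b <= 2 * K + 1 ->
  at_least_countable (Sset b (2 * k)).
Proof.
  intros Hb HQ Hbm'.
  assert (Hbm : b <= INR (2 * k) + 1) by (rewrite INR_double; fold K; lra).
  assert (Hgap : (INR (k + 1) - INR (k - 1)) / (2 * (b + 1)) = / (b + 1))
    by (rewrite plus_INR, minus_INR by lia; simpl; field; lra).
  assert (Hclose : Wmid b (2 * k) + / (b + 1) < 1).
  { apply Wmid_add_lt_1; [lra|]; rewrite INR_double; fold K.
    assert (/ (b + 1) * (b + 1) = 1) by (field; lra); nra. }
  assert (Hinv : 0 < / (b + 1)) by (apply Rinv_0_lt_compat; lra).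
  destruct (Sset_alt b (2 * k) ltac:(lra) Hbm (k + 1) (k - 1) ltac:(lia)) as [Hg Hgv];
    [rewrite Hgap, Rabs_right; lra|].
  apply (countable_Sset_of_pair_prefix b (2 * k) ltac:(lra) Hbm k k ltac:(lia) _ Hg);
    replace (INR k - INR k) with 0 by ring; rewrite Rdiv_0_l, Hgv, Hgap, ?Rabs_R0.
  - lra.
  - replace (_ + _ - _) with (/ (b + 1)) by ring; rewrite Rabs_right; lra.
Qed.

End Even.

Definition beta_f_poly (K y : R) : R := y ^ 3 - (K + 2) * y ^ 2 + y - (K + 1).

Section Odd.

Variable k : nat.
Hypothesis Hk : (1 <= k)%nat.

Let K := INR k.

Lemma Sset_odd_digit b e n : K + 1 < b < K + 2 -> Sset b (2 * k + 1) e ->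
  e n = k \/ e n = (k + 1)%nat.
Proof.
  intros Hb He; assert (HK : 0 <= K) by apply pos_INR.
  assert (Hbm : b <= INR (2 * k + 1) + 1) by (rewrite INR_double_add1; fold K; lra).
  pose proof (digit_window b _ ltac:(lra) Hbm e n He) as Hw.
  pose proof (Wlo_mul b (2 * k + 1) ltac:(lra)) as HL.
  pose proof (Wlo_nonneg b _ ltac:(lra) Hbm).
  rewrite INR_double_add1 in HL; fold K in HL; set (L := Wlo b (2 * k + 1)) in *.
  assert (K <= b * L) by nra.
  pose proof (le_of_INR_lt_add1 (e n) (k + 1) ltac:(rewrite plus_INR; simpl; fold K; lra)).
  pose proof (le_of_INR_lt_add1 k (e n) ltac:(fold K; lra)).
  lia.
Qed.

(* Two equal consecutive digits would force [beta_f_poly K b > 0]: this is where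
   [beta_f] comes from. *)
Lemma Sset_odd_no_repeat b e n : K + 1 < b -> beta_f_poly K b <= 0 ->
  Sset b (2 * k + 1) e -> e (S n) <> e n.
Proof.
  intros Hb HP He Hrep.
  assert (HK : 1 <= K) by (apply (le_INR 1); auto).
  assert (Hb2 : b < K + 2) by (unfold beta_f_poly in HP; nra).
  assert (Hbm : b <= INR (2 * k + 1) + 1) by (rewrite INR_double_add1; fold K; lra).
  pose proof (digit_pair_window b _ ltac:(lra) Hbm e n He) as Hw.
  pose proof (Wlo_mul b (2 * k + 1) ltac:(lra)) as HL.
  rewrite INR_double_add1 in HL; fold K in HL; set (L := Wlo b (2 * k + 1)) in *.
  rewrite Hrep in Hw; unfold beta_f_poly in HP.
  destruct (Sset_odd_digit b e n ltac:(lra) He) as [E|E]; rewrite E in Hw.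
  - fold K in Hw; nra.
  - rewrite plus_INR in Hw; simpl in Hw; fold K in Hw; nra.
Qed.

Lemma card_two_odd b : K + 1 < b -> 0 < b ^ 2 - (K + 1) * b - (K + 1) ->
  beta_f_poly K b <= 0 -> card_is_two (Sset b (2 * k + 1)).
Proof.
  intros Hb HQ HP; assert (HK : 0 <= K) by apply pos_INR.
  assert (Hb2 : b < K + 2) by (unfold beta_f_poly in HP; nra).
  assert (Hbm : b <= INR (2 * k + 1) + 1) by (rewrite INR_double_add1; fold K; lra).
  assert (Hinv : 0 < / (2 * (b + 1))) by (apply Rinv_0_lt_compat; lra).
  assert (Hclose : Wmid b (2 * k + 1) + / (2 * (b + 1)) < 1).
  { apply Wmid_add_lt_1; [lra|]; rewrite INR_double_add1; fold K.
    assert (/ (2 * (b + 1)) * (2 * (b + 1)) = 1) by (field; lra); nra. }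
  assert (Hgap : INR (k + 1) - INR k = 1) by (rewrite plus_INR; simpl; ring).
  exists (alt (k + 1) k), (alt k (k + 1)); split; [|split; [|split]].
  - intros E; apply (f_equal (fun f => f O)) in E; unfold alt in E; simpl in E; lia.
  - apply (Sset_alt b _ ltac:(lra) Hbm (k + 1) k ltac:(lia)).
    rewrite Hgap; unfold Rdiv; rewrite Rmult_1_l, Rabs_right; lra.
  - apply (Sset_alt b _ ltac:(lra) Hbm k (k + 1) ltac:(lia)).
    replace (INR k - INR (k + 1)) with (- 1) by lra.
    replace (- 1 / (2 * (b + 1))) with (- / (2 * (b + 1))) by (field; lra).
    rewrite Rabs_Ropp, Rabs_right; lra.
  - intros e He; apply alt_of_no_repeat.
    + intro n; destruct (Sset_odd_digit b e n ltac:(lra) He); auto.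
    + intro n; apply (Sset_odd_no_repeat b e n Hb HP He).
Qed.

Lemma countable_odd b : K + 1 < b -> 0 < beta_f_poly K b -> b <= 2 * K + 2 ->
  at_least_countable (Sset b (2 * k + 1)).
Proof.
  intros Hb HP Hbm'; assert (HK : 0 <= K) by apply pos_INR.
  assert (Hbm : b <= INR (2 * k + 1) + 1) by (rewrite INR_double_add1; fold K; lra).
  assert (Hgap : INR (k + 1) - INR k = 1) by (rewrite plus_INR; simpl; ring).
  set (a := 1 / (2 * (b + 1))).
  set (r0 := 1 / 2 * (b + 1) / (b ^ 2 + 1)).
  assert (Ha : 0 < a) by (unfold a; apply Rdiv_lt_0_compat; lra).
  assert (Har : a < r0).
  { unfold a, r0; apply (Rmult_lt_reg_r (2 * (b + 1) * (b ^ 2 + 1))); [nra|].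
    field_simplify; nra. }
  assert (Hclose : Wmid b (2 * k + 1) + r0 < 1).
  { apply Wmid_add_lt_1; [lra|]; rewrite INR_double_add1; fold K.
    assert (Hr0 : r0 * (2 * (b ^ 2 + 1)) = b + 1) by (unfold r0; field; nra).
    apply (Rmult_lt_reg_r (2 * (b ^ 2 + 1))); [nra|].
    replace ((2 * K + 1 + 2 * r0 * (b - 1)) * (2 * (b ^ 2 + 1)))
      with ((2 * K + 1) * (2 * (b ^ 2 + 1)) + 2 * (b - 1) * (r0 * (2 * (b ^ 2 + 1)))) by ring.
    rewrite Hr0; unfold beta_f_poly in HP; lra. }
  pose proof (Sset_cyc4 b _ ltac:(lra) Hbm (k + 1) k ltac:(lia)) as Hcyc.
  rewrite Hgap in Hcyc; fold r0 in Hcyc.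
  destruct Hcyc as [Hg Hgv]; [rewrite Rabs_right; lra|].
  apply (countable_Sset_of_pair_prefix b _ ltac:(lra) Hbm (k + 1) k ltac:(lia) _ Hg);
    rewrite Hgap, Hgv; fold a.
  - lra.
  - replace (_ + r0 - _) with (r0 - a) by ring; rewrite !Rabs_right; lra.
Qed.

End Odd.

Lemma lt_quadratic_root c d x : 0 <= d -> 0 <= x ->
  (c + sqrt (c ^ 2 + 4 * d)) / 2 < x <-> 0 < x ^ 2 - c * x - d.
Proof.
  intros Hd Hx.
  set (s := sqrt (c ^ 2 + 4 * d)).
  assert (Hs0 : 0 <= s) by apply sqrt_pos.
  assert (Hss : s * s = c ^ 2 + 4 * d) by (apply sqrt_sqrt; nra).
  assert (Hfac : x ^ 2 - c * x - d = (x - (c + s) / 2) * (x - (c - s) / 2))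
    by (field_simplify; nra).
  assert (Hlow : (c - s) / 2 <= 0) by nra.
  rewrite Hfac; split; intros H.
  - apply Rmult_lt_0_compat; lra.
  - destruct (Rlt_le_dec ((c + s) / 2) x); auto.
    assert ((x - (c + s) / 2) * (x - (c - s) / 2) <= 0)
      by (apply Rmult_le_0_r; lra).
    lra.
Qed.

Lemma beta_f_poly_root_gt K y : 0 <= K -> beta_f_poly K y = 0 -> K + 1 < y.
Proof.
  unfold beta_f_poly; intros HK H.
  destruct (Rlt_le_dec (K + 1) y) as [|Hy]; auto.
  assert (0 <= y ^ 2 * (K + 2 - y)) by (apply Rmult_le_pos; nra). nra.
Qed.

Lemma beta_f_poly_nonpos K bf b : 1 <= K -> beta_f_poly K bf = 0 -> K + 1 < b <= bf ->
  beta_f_poly K b <= 0.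
Proof.
  unfold beta_f_poly; intros HK H0 [Hb Hbf].
  assert (Hdiff : bf ^ 3 - (K + 2) * bf ^ 2 + bf - (K + 1) - (b ^ 3 - (K + 2) * b ^ 2 + b - (K + 1))
                  = (bf - b) * (bf ^ 2 + bf * b + b ^ 2 - (K + 2) * (bf + b) + 1)) by ring.
  assert (0 <= (bf - b) * (bf ^ 2 + bf * b + b ^ 2 - (K + 2) * (bf + b) + 1))
    by (apply Rmult_le_pos; nra).
  lra.
Qed.

Lemma beta_f_poly_pos K bf b : 0 <= K -> (forall y, beta_f_poly K y = 0 -> y <= bf) ->
  bf < b -> K + 1 < b -> 0 < beta_f_poly K b.
Proof.
  intros HK Hmax Hbf Hb.
  destruct (Rlt_le_dec b (K + 2)) as [Hb2|Hb2].
  - destruct (Rlt_le_dec 0 (beta_f_poly K b)) as [|[Hneg|Hzero]]; auto; exfalso.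
    + assert (Hcont : continuity (beta_f_poly K)) by (unfold beta_f_poly; reg).
      assert (Hend : 0 < beta_f_poly K (K + 2)) by (unfold beta_f_poly; ring_simplify; lra).
      destruct (IVT _ b (K + 2) Hcont Hb2 Hneg Hend) as [z [Hz Hz0]].
      apply Hmax in Hz0; lra.
    + apply Hmax in Hzero; lra.
  - unfold beta_f_poly.
    assert (0 <= b ^ 2 * (b - (K + 2))) by (apply Rmult_le_pos; nra). nra.
Qed.

Lemma proposition4p7_even k bf : (1 <= k)%nat ->
  bf = (INR k + 1 + sqrt (INR k ^ 2 + 6 * INR k + 1)) / 2 ->
  (forall b, INR k + 1 < b <= bf -> card_is_one (Sset b (2 * k))) /\
  (forall b, bf < b <= INR (2 * k) + 1 -> at_least_countable (Sset b (2 * k))).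
Proof.
  intros Hk ->; set (K := INR k).
  assert (HK : 1 <= K) by (apply (le_INR 1); auto).
  assert (Hroot : forall b, 0 <= b ->
            (K + 1 + sqrt (K ^ 2 + 6 * K + 1)) / 2 < b <-> 0 < b ^ 2 - (K + 1) * b - K).
  { intros b Hb; replace (K ^ 2 + 6 * K + 1) with ((K + 1) ^ 2 + 4 * K) by ring.
    apply lt_quadratic_root; lra. }
  pose proof (sqrt_pos (K ^ 2 + 6 * K + 1)).
  split; intros b [Hlo Hhi].
  - apply card_one_even; auto.
    apply Rnot_lt_le; intros HQ; apply Hroot in HQ; lra.
  - pose proof (proj1 (Hroot b ltac:(lra)) Hlo) as HQ.
    rewrite INR_double in Hhi; fold K in Hhi.
    assert (Hb : 0 < b) by lra.
    apply countable_even; auto; fold K; nra.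
Qed.

Lemma proposition4p7_odd k bf : (1 <= k)%nat ->
  beta_f_poly (INR k) bf = 0 -> (forall y, beta_f_poly (INR k) y = 0 -> y <= bf) ->
  (forall b, (INR k + 1 + sqrt (INR k ^ 2 + 6 * INR k + 5)) / 2 < b <= bf ->
     card_is_two (Sset b (2 * k + 1))) /\
  (forall b, bf < b <= INR (2 * k + 1) + 1 -> at_least_countable (Sset b (2 * k + 1))).
Proof.
  intros Hk Hbf Hmax; set (K := INR k) in *.
  assert (HK : 1 <= K) by (apply (le_INR 1); auto).
  pose proof (beta_f_poly_root_gt K bf ltac:(lra) Hbf).
  split; intros b [Hlo Hhi].
  - pose proof (sqrt_pos (K ^ 2 + 6 * K + 5)).
    assert (HQ : 0 < b ^ 2 - (K + 1) * b - (K + 1)).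
    { apply lt_quadratic_root; [lra|lra|].
      replace ((K + 1) ^ 2 + 4 * (K + 1)) with (K ^ 2 + 6 * K + 5) by ring; lra. }
    assert (Hb : K + 1 < b) by nra.
    apply card_two_odd; auto.
    apply (beta_f_poly_nonpos K bf b); auto; lra.
  - rewrite INR_double_add1 in Hhi; fold K in Hhi.
    apply countable_odd; fold K; [auto|lra| |lra].
    apply (beta_f_poly_pos K bf b); auto; lra.
Qed.

Theorem proposition4p7 (m : nat) (bf : R) :
  (2 <= m)%nat -> is_beta_f m bf ->
  (forall beta, Gm m < beta <= bf ->
     (Nat.even m = true -> card_is_one (Sset beta m)) /\
     (Nat.even m = false -> card_is_two (Sset beta m))) /\
  (forall beta, bf < beta <= INR m + 1 ->
     at_least_countable (Sset beta m)).
Proof.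
  intros Hm Hbf; unfold is_beta_f, Gm in *; cbv zeta in *.
  pose proof (Nat.div2_odd m) as Hdiv; rewrite <- Nat.negb_even in Hdiv.
  set (k := Nat.div2 m) in *; clearbody k.
  destruct (Nat.even m); cbn [negb Nat.b2n] in Hdiv; rewrite ?Nat.add_0_r in Hdiv; subst m.
  - destruct (proposition4p7_even k bf ltac:(lia) Hbf) as [Hone Hcount].
    split; [intros b Hb; split; [intros _; apply Hone, Hb|discriminate]|exact Hcount].
  - destruct Hbf as [Hbf Hmax].
    destruct (proposition4p7_odd k bf ltac:(lia) Hbf Hmax) as [Htwo Hcount].
    split; [intros b Hb; split; [discriminate|intros _; apply Htwo, Hb]|exact Hcount].
Qed.
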